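(* Let $K$ be a field and $m,n,r$ positive integers. For positive integers $a,b,c$, let $R_{abc}=K[x_{ij}^k\mid 1\le i\le a,1\le j\le b,1\le k\le c]$ and let $I_{ab}^c\subseteq R_{abc}$ be the ideal generated by all $2$-minors of the horizontal concatenation $(X_1\ \cdots\ X_c)$ and all $2$-minors of the vertical concatenation (the $X_k$ stacked vertically) of the $a\times b$ matrices $X_k=(x_{ij}^k)$, $k=1,\dots,c$. Let $\sigma$ be any permutation of $(m,n,r)$, i.e. $(\sigma(m),\sigma(n),\sigma(r))$ is a reordering of the triple $(m,n,r)$. Then $R_{mnr}/I_{mn}^r\cong R_{\sigma(m)\sigma(n)\sigma(r)}/I_{\sigma(m)\sigma(n)}^{\sigma(r)}$ as $K$-algebras. *)

From HB Require Import structures.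
From mathcomp Require Import all_boot all_order all_algebra.
From mathcomp Require Import ring_quotient.
From mathcomp Require Import mpoly.
From Stdlib Require Import ClassicalEpsilon.

Set Implicit Arguments.
Unset Strict Implicit.
Unset Printing Implicit Defensive.

Import GRing.Theory.
Local Open Scope ring_scope.
Local Open Scope quotient_scope.

Definition pbool (P : Prop) : bool :=
  if excluded_middle_informative P then true else false.

Lemma pboolP (P : Prop) : reflect P (pbool P).
Proof. by rewrite /pbool; case: excluded_middle_informative => h; constructor. Qed.

Definition ideal_gen (R : comNzRingType) (G : R -> Prop) (p : R) : Prop :=
  exists s : seq (R * R), (forall q, q \in s -> G q.2) /\
                          p = \sum_(q <- s) q.1 * q.2.

Definition idx (a b c : nat) := ('I_a * 'I_b * 'I_c)%type.

Definition Rabc (K : fieldType) (a b c : nat) := {mpoly K[#|{: idx a b c}|]}.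

Definition xv (K : fieldType) (a b c : nat) (i : 'I_a) (j : 'I_b) (k : 'I_c)
  : Rabc K a b c := 'X_(enum_rank ((i, j, k) : idx a b c)).

Definition minor2 (R : comNzRingType) (rT cT : Type) (M : rT -> cT -> R)
  (r1 r2 : rT) (c1 c2 : cT) : R :=
  M r1 c1 * M r2 c2 - M r1 c2 * M r2 c1.

(* Horizontal concatenation (X_1 ... X_c): an a x (c*b) matrix; its column
   (k, j) (block k, column j inside the block) has position k*b + j. *)
Definition hcat (K : fieldType) (a b c : nat) (i : 'I_a) (kj : 'I_c * 'I_b)
  : Rabc K a b c := xv K i kj.2 kj.1.
Definition hcat_col (b c : nat) (kj : 'I_c * 'I_b) : nat := kj.1 * b + kj.2.

(* Vertical concatenation (X_1 over ... over X_c): a (c*a) x b matrix; its row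
   (k, i) has position k*a + i. *)
Definition vcat (K : fieldType) (a b c : nat) (ki : 'I_c * 'I_a) (j : 'I_b)
  : Rabc K a b c := xv K ki.2 j ki.1.
Definition vcat_row (a c : nat) (ki : 'I_c * 'I_a) : nat := ki.1 * a + ki.2.

Definition minor_gens (K : fieldType) (a b c : nat) (p : Rabc K a b c) : Prop :=
  (exists (i1 i2 : 'I_a) (c1 c2 : 'I_c * 'I_b),
      (i1 < i2)%N /\ (hcat_col c1 < hcat_col c2)%N /\
      p = minor2 (@hcat K a b c) i1 i2 c1 c2)
  \/
  (exists (r1 r2 : 'I_c * 'I_a) (j1 j2 : 'I_b),
      (vcat_row r1 < vcat_row r2)%N /\ (j1 < j2)%N /\
      p = minor2 (@vcat K a b c) r1 r2 j1 j2).

Definition Iabc (K : fieldType) (a b c : nat) : {pred Rabc K a b c} :=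
  fun p => pbool (ideal_gen (@minor_gens K a b c) p).

Lemma minor_gens_eval0 (K : fieldType) (a b c : nat) (p : Rabc K a b c) :
  minor_gens p -> p.@[fun=> 0] = 0.
Proof.
case=> [[i1 [i2 [c1 [c2 [_ [_ ->]]]]]]|[r1 [r2 [j1 [j2 [_ [_ ->]]]]]]];
  by rewrite /minor2 /hcat /vcat /xv rmorphB !rmorphM /= !mevalXU !mul0r subr0.
Qed.

Lemma Iabc_closed (K : fieldType) (a b c : nat) : idealr_closed (@Iabc K a b c).
Proof.
split.
- by apply/pboolP; exists [::]; split => //; rewrite big_nil.
- apply/negP => /pboolP [s [Hs E]].
  have := congr1 (fun p : Rabc K a b c => p.@[fun=> 0]) E.
  rewrite /= rmorph1 rmorph_sum /= big1_seq; first by move/eqP; rewrite oner_eq0.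
  by move=> q /Hs Hq; rewrite rmorphM /= (minor_gens_eval0 Hq) mulr0.
- move=> r u v /pboolP [su [Hu Eu]] /pboolP [sv [Hv Ev]].
  apply/pboolP; exists ([seq (r * q.1, q.2) | q <- su] ++ sv); split.
  + move=> q; rewrite mem_cat => /orP [/mapP [q' /Hu Hq' ->]|/Hv] //.
  + by rewrite big_cat big_map /= Eu Ev mulr_sumr; congr (_ + _);
      apply: eq_bigr => q _; rewrite mulrA.
Qed.

HB.instance Definition _ (K : fieldType) (a b c : nat) :=
  isIdealr.Build (Rabc K a b c) (@Iabc K a b c) (@Iabc_closed K a b c).

Definition Qabc (K : fieldType) (a b c : nat) := {ideal_quot (@Iabc K a b c)}.

Definition Qcst (K : fieldType) (a b c : nat) (x : K) : Qabc K a b c :=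
  \pi_(Qabc K a b c) (x%:MP : Rabc K a b c).

Definition kalg_iso (K : fieldType) (a b c a' b' c' : nat)
  (f : Qabc K a b c -> Qabc K a' b' c') : Prop :=
  [/\ bijective f, zmod_morphism f, monoid_morphism f &
      forall x : K, f (Qcst a b c x) = Qcst a' b' c' x].

From HB Require Import structures.
From mathcomp Require Import all_boot all_order all_algebra ring_quotient mpoly.
From mathcomp Require Import ring.

(* Besides the 2-minors of the horizontal and vertical concatenations, which
   are the 2-minors of two of the three flattenings of the a x b x c tensor of
   variables, I_{ab}^c contains the 2-minors of the third flattening (rows
   indexed by (i, j), columns by k): each is the sum of a horizontal and a
   vertical minor. Hence the ideal is symmetric in the three tensor
   directions, and permuting the indices of the variables gives K-algebra
   isomorphisms for the transpositions of (a, b) and of (b, c), which generate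
   all reorderings. *)

Set Implicit Arguments.
Unset Strict Implicit.
Unset Printing Implicit Defensive.
Import GRing.Theory.
Local Open Scope ring_scope.
Local Open Scope quotient_scope.

Lemma comp_mpolyA (R : comNzRingType) n k l (lq : n.-tuple {mpoly R[k]})
    (lr : k.-tuple {mpoly R[l]}) (p : {mpoly R[n]}) :
  (p \mPo lq) \mPo lr = p \mPo [tuple tnth lq i \mPo lr | i < n].
Proof.
rewrite [p \mPo lq]comp_mpolyEX [p \mPo _]comp_mpolyEX raddf_sum /=.
apply: eq_bigr => mo _; rewrite comp_mpolyZ !comp_mpolyX rmorph_prod /=.
by congr (_ *: _); apply: eq_bigr => i _; rewrite rmorphXn tnth_mktuple.
Qed.

Section Substitution.
Variable K : fieldType.

Definition var a b c (t : idx a b c) : Rabc K a b c := 'X_(enum_rank t).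

Definition subst a b c a' b' c' (E : idx a b c -> Rabc K a' b' c') :
    Rabc K a b c -> Rabc K a' b' c' :=
  comp_mpoly [tuple E (enum_val i) | i < #|{: idx a b c}|].

Section SubstMorphism.
Variables (a b c a' b' c' : nat) (E : idx a b c -> Rabc K a' b' c').
HB.instance Definition _ := GRing.RMorphism.on (subst E).
End SubstMorphism.

Variables (a b c a' b' c' : nat).
Implicit Types (E F : idx a b c -> Rabc K a' b' c') (p : Rabc K a b c).

Lemma subst_xv E i j k : subst E (xv K i j k) = E (i, j, k).
Proof. by rewrite /subst comp_mpolyXU -tnth_nth tnth_mktuple enum_rankK. Qed.

Lemma subst_C E x : subst E x%:MP = x%:MP.
Proof. exact: comp_mpolyC. Qed.

Lemma eq_subst E F : E =1 F -> subst E =1 subst F.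
Proof.
by move=> EF p; rewrite /subst; congr (_ \mPo _); apply: eq_from_tnth => i;
  rewrite !tnth_mktuple EF.
Qed.

Lemma subst_varE : subst (@var a b c) =1 id.
Proof.
move=> p; rewrite /= -[RHS]comp_mpoly_id /subst; congr (_ \mPo _).
by apply: eq_from_tnth => i; rewrite !tnth_mktuple /var enum_valK.
Qed.

Lemma subst_comp a'' b'' c'' E (G : idx a' b' c' -> Rabc K a'' b'' c'') p :
  subst G (subst E p) = subst (subst G \o E) p.
Proof.
rewrite /subst comp_mpolyA; congr (_ \mPo _); apply: eq_from_tnth => i.
by rewrite !tnth_mktuple.
Qed.

End Substitution.

Section Minors.
Variables (R : comNzRingType) (rT cT : Type) (M : rT -> cT -> R).

Lemma minor2_swap_rows r1 r2 c1 c2 :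
  minor2 M r2 r1 c1 c2 = - minor2 M r1 r2 c1 c2.
Proof. by rewrite /minor2; ring. Qed.

Lemma minor2_swap_cols r1 r2 c1 c2 :
  minor2 M r1 r2 c2 c1 = - minor2 M r1 r2 c1 c2.
Proof. by rewrite /minor2; ring. Qed.

Lemma minor2_same_row r c1 c2 : minor2 M r r c1 c2 = 0.
Proof. by rewrite /minor2 mulrC subrr. Qed.

Lemma minor2_same_col r1 r2 c : minor2 M r1 r2 c c = 0.
Proof. by rewrite /minor2 subrr. Qed.

Lemma mem_minor2 (S : zmodClosed R) (kr : rT -> nat) (kc : cT -> nat) :
  injective kr -> injective kc ->
  (forall r1 r2 c1 c2, (kr r1 < kr r2)%N -> (kc c1 < kc c2)%N ->
     minor2 M r1 r2 c1 c2 \in S) ->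
  forall r1 r2 c1 c2, minor2 M r1 r2 c1 c2 \in S.
Proof.
move=> kr_inj kc_inj ordered.
have rows_ordered r1 r2 c1 c2 : (kr r1 < kr r2)%N -> minor2 M r1 r2 c1 c2 \in S.
  move=> lt_r; case: (ltngtP (kc c1) (kc c2)) => [lt_c|lt_c|/kc_inj->].
  - exact: ordered.
  - by rewrite -rpredN -minor2_swap_cols; apply: ordered.
  - by rewrite minor2_same_col rpred0.
move=> r1 r2 c1 c2; case: (ltngtP (kr r1) (kr r2)) => [lt_r|lt_r|/kr_inj->].
- exact: rows_ordered.
- by rewrite -rpredN -minor2_swap_rows; apply: rows_ordered.
- by rewrite minor2_same_row rpred0.
Qed.

End Minors.

Lemma block_index_inj (b c : nat) :
  injective (fun kj : 'I_c * 'I_b => kj.1 * b + kj.2)%N.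
Proof.
move=> [k1 j1] [k2 j2] /= E.
have ej : j1 = j2 :> nat.
  by move: (congr1 (modn^~ b) E); rewrite /= !modnMDl !modn_small.
have b_gt0 : (0 < b)%N by apply: leq_ltn_trans (ltn_ord j1).
move: E; rewrite ej => /addIn /eqP; rewrite eqn_pmul2r // => /eqP ek.
by congr pair; apply: val_inj.
Qed.

Lemma mem_ideal_gen (R : comNzRingType) (G : R -> Prop) p :
  G p -> ideal_gen G p.
Proof.
by exists [:: (1, p)]; split => [q /[1!inE] /eqP ->|]; rewrite ?big_seq1 ?mul1r.
Qed.

Lemma rmorph_ideal_gen (R S : comNzRingType) (G : R -> Prop) (J : idealr S)
    (phi : {rmorphism R -> S}) :
  (forall g, G g -> phi g \in J) -> forall p, ideal_gen G p -> phi p \in J.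
Proof.
move=> GJ p [s [sG ->]]; rewrite rmorph_sum big_seq /=.
by apply: rpred_sum => q /sG /GJ Jq; rewrite rmorphM idealMr.
Qed.

Section Ideal.
Variables (K : fieldType) (a b c : nat).

Lemma IabcP p :
  reflect (ideal_gen (@minor_gens K a b c) p) (p \in @Iabc K a b c).
Proof. exact: pboolP. Qed.

Lemma hcat_minor_Iabc i1 i2 c1 c2 :
  minor2 (@hcat K a b c) i1 i2 c1 c2 \in @Iabc K a b c.
Proof.
apply: (mem_minor2 (kr := @nat_of_ord a) (kc := @hcat_col b c)).
- exact: val_inj.
- exact: block_index_inj.
- move=> r1 r2 d1 d2 lt_r lt_d; apply/IabcP/mem_ideal_gen; left.
  by exists r1, r2, d1, d2.
Qed.

Lemma vcat_minor_Iabc r1 r2 j1 j2 :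
  minor2 (@vcat K a b c) r1 r2 j1 j2 \in @Iabc K a b c.
Proof.
apply: (mem_minor2 (kr := @vcat_row a c) (kc := @nat_of_ord b)).
- exact: block_index_inj.
- exact: val_inj.
- move=> s1 s2 d1 d2 lt_s lt_d; apply/IabcP/mem_ideal_gen; right.
  by exists s1, s2, d1, d2.
Qed.

Definition tube_mat (ij : 'I_a * 'I_b) (k : 'I_c) : Rabc K a b c :=
  xv K ij.1 ij.2 k.

Lemma tube_minor_Iabc r1 r2 k1 k2 :
  minor2 tube_mat r1 r2 k1 k2 \in @Iabc K a b c.
Proof.
case: r1 r2 => [i1 j1] [i2 j2].
have -> : minor2 tube_mat (i1, j1) (i2, j2) k1 k2 =
    minor2 (@hcat K a b c) i1 i2 (k1, j1) (k2, j2) +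
    minor2 (@vcat K a b c) (k2, i1) (k1, i2) j2 j1.
  by rewrite /minor2 /tube_mat /hcat /vcat /=; ring.
by rewrite rpredD ?hcat_minor_Iabc ?vcat_minor_Iabc.
Qed.

End Ideal.

Lemma pi_rmorph_repr (R S : comNzRingType) (I : idealr R) (J : idealr S)
    (phi : {rmorphism R -> S}) :
  {in I, forall p, phi p \in J} ->
  forall p, \pi_{ideal_quot J} (phi (repr (\pi_{ideal_quot I} p))) =
            \pi_{ideal_quot J} (phi p).
Proof.
move=> phiIJ p; apply/eqP; rewrite -Quotient.idealrBE -rmorphB; apply: phiIJ.
by rewrite Quotient.idealrBE reprK.
Qed.

Lemma quot_iso_of_rmorph (R S : comNzRingType) (I : idealr R) (J : idealr S)
    (phi : {rmorphism R -> S}) (psi : {rmorphism S -> R}) :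
  {in I, forall p, phi p \in J} -> {in J, forall q, psi q \in I} ->
  cancel phi psi -> cancel psi phi ->
  exists f : {ideal_quot I} -> {ideal_quot J},
    [/\ bijective f, zmod_morphism f, monoid_morphism f &
        forall p, f (\pi_{ideal_quot I} p) = \pi_{ideal_quot J} (phi p)].
Proof.
move=> /pi_rmorph_repr fE /pi_rmorph_repr gE phiK psiK.
pose f (x : {ideal_quot I}) : {ideal_quot J} :=
  \pi_{ideal_quot J} (phi (repr x)).
pose g (y : {ideal_quot J}) : {ideal_quot I} :=
  \pi_{ideal_quot I} (psi (repr y)).
exists f; split => //.
- exists g => x; rewrite -[x]reprK /f /g.
    by rewrite fE gE phiK.
  by rewrite gE fE psiK.
- by move=> x y; rewrite -[x]reprK -[y]reprK -rmorphB /f !fE !rmorphB.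
- split=> [|x y]; last by rewrite -[x]reprK -[y]reprK -rmorphM /f !fE !rmorphM.
  by rewrite -(rmorph1 (\pi_{ideal_quot I})) /f fE !rmorph1.
Qed.

Section Isomorphism.
Variable K : fieldType.

Definition quot_isomorphic (a b c a' b' c' : nat) : Prop :=
  exists f : Qabc K a b c -> Qabc K a' b' c', kalg_iso f.

Lemma quot_isomorphic_refl a b c : quot_isomorphic a b c a b c.
Proof. by exists id; split => //; exists id. Qed.

Lemma quot_isomorphic_trans a b c a' b' c' a'' b'' c'' :
  quot_isomorphic a b c a' b' c' -> quot_isomorphic a' b' c' a'' b'' c'' ->
  quot_isomorphic a b c a'' b'' c''.
Proof.
move=> [f [f_bij f_add [f1 fM] f_cst]] [g [g_bij g_add [g1 gM] g_cst]].
exists (g \o f); split.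
- exact: bij_comp.
- by move=> x y /=; rewrite f_add g_add.
- by split=> [|x y] /=; rewrite ?f1 ?g1 ?fM ?gM.
- by move=> x /=; rewrite f_cst g_cst.
Qed.

Variables (a b c a' b' c' : nat).

Lemma subst_Iabc (E : idx a b c -> Rabc K a' b' c') :
  (forall g, minor_gens g -> subst E g \in @Iabc K a' b' c') ->
  {in @Iabc K a b c, forall p, subst E p \in @Iabc K a' b' c'}.
Proof. by move=> EI p /IabcP; apply: rmorph_ideal_gen. Qed.

Lemma quot_isomorphic_of_subst (E : idx a b c -> Rabc K a' b' c')
    (F : idx a' b' c' -> Rabc K a b c) :
  {in @Iabc K a b c, forall p, subst E p \in @Iabc K a' b' c'} ->
  {in @Iabc K a' b' c', forall q, subst F q \in @Iabc K a b c} ->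
  cancel (subst E) (subst F) -> cancel (subst F) (subst E) ->
  quot_isomorphic a b c a' b' c'.
Proof.
move=> EI FI EK FK.
have [f [f_bij f_add f_mul f_pi]] := quot_iso_of_rmorph EI FI EK FK.
by exists f; split=> // x; rewrite /Qcst f_pi /= subst_C.
Qed.

End Isomorphism.

Section Transpositions.
Variable K : fieldType.

Definition swap_ij a b c (t : idx a b c) : Rabc K b a c :=
  xv K t.1.2 t.1.1 t.2.
Definition swap_jk a b c (t : idx a b c) : Rabc K a c b :=
  xv K t.1.1 t.2 t.1.2.

Variables a b c : nat.

Lemma swap_ij_Iabc :
  {in @Iabc K a b c, forall p, subst (@swap_ij a b c) p \in @Iabc K b a c}.
Proof.
apply: subst_Iabc => _ [[i1 [i2 [[k1 j1] [[k2 j2] [_ [_ ->]]]]]]|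
                        [[k1 i1] [[k2 i2] [j1 [j2 [_ [_ ->]]]]]]].
- rewrite [X in X \in _](_ : _ = minor2 (@vcat K b a c) (k1, j1) (k2, j2) i1 i2)
    ?vcat_minor_Iabc //.
  by rewrite /minor2 /hcat /vcat rmorphB !rmorphM /=
    !subst_xv /swap_ij /=; ring.
- rewrite [X in X \in _](_ : _ = minor2 (@hcat K b a c) j1 j2 (k1, i1) (k2, i2))
    ?hcat_minor_Iabc //.
  by rewrite /minor2 /hcat /vcat rmorphB !rmorphM /=
    !subst_xv /swap_ij /=; ring.
Qed.

Lemma swap_jk_Iabc :
  {in @Iabc K a b c, forall p, subst (@swap_jk a b c) p \in @Iabc K a c b}.
Proof.
apply: subst_Iabc => _ [[i1 [i2 [[k1 j1] [[k2 j2] [_ [_ ->]]]]]]|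
                        [[k1 i1] [[k2 i2] [j1 [j2 [_ [_ ->]]]]]]].
- rewrite [X in X \in _](_ : _ = minor2 (@hcat K a c b) i1 i2 (j1, k1) (j2, k2))
    ?hcat_minor_Iabc //.
  by rewrite /minor2 /hcat rmorphB !rmorphM /=
    !subst_xv /swap_jk /=; ring.
- rewrite [X in X \in _]
    (_ : _ = minor2 (@tube_mat K a c b) (i1, k1) (i2, k2) j1 j2)
    ?tube_minor_Iabc //.
  by rewrite /minor2 /vcat /tube_mat rmorphB !rmorphM /=
    !subst_xv /swap_jk /=; ring.
Qed.

Lemma swap_ijK : cancel (subst (@swap_ij a b c)) (subst (@swap_ij b a c)).
Proof.
move=> p; rewrite subst_comp -[RHS]subst_varE; apply: eq_subst => -[[i j] k].
by rewrite /= subst_xv.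
Qed.

Lemma swap_jkK : cancel (subst (@swap_jk a b c)) (subst (@swap_jk a c b)).
Proof.
move=> p; rewrite subst_comp -[RHS]subst_varE; apply: eq_subst => -[[i j] k].
by rewrite /= subst_xv.
Qed.

End Transpositions.

Lemma quot_isomorphic_swap_ij K a b c : quot_isomorphic K a b c b a c.
Proof.
by apply: quot_isomorphic_of_subst
  (@swap_ij_Iabc K a b c) (@swap_ij_Iabc K b a c)
  (@swap_ijK K a b c) (@swap_ijK K b a c).
Qed.

Lemma quot_isomorphic_swap_jk K a b c : quot_isomorphic K a b c a c b.
Proof.
by apply: quot_isomorphic_of_subst
  (@swap_jk_Iabc K a b c) (@swap_jk_Iabc K a c b)
  (@swap_jkK K a b c) (@swap_jkK K a c b).
Qed.

Lemma perm_eq_pair (T : eqType) (x y x' y' : T) :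
  perm_eq [:: x; y] [:: x'; y'] ->
  (x', y') = (x, y) \/ (x', y') = (y, x).
Proof.
move/perm_consP => [j [w [ew /perm_small_eq w1]]]; rewrite w1 // in ew.
by case: j ew => [|[|j]] /= [-> ->]; [left | right | left].
Qed.

Lemma perm_eq_triple (T : eqType) (m n r m' n' r' : T) :
  perm_eq [:: m; n; r] [:: m'; n'; r'] ->
  (m', n', r') = (m, n, r) \/ (m', n', r') = (m, r, n) \/
  (m', n', r') = (n, m, r) \/ (m', n', r') = (n, r, m) \/
  (m', n', r') = (r, m, n) \/ (m', n', r') = (r, n, m).
Proof.
move/perm_consP => [i [u [eu]]].
by case: i eu => [|[|[|i]]] /= [<- <-] /perm_eq_pair [] [-> ->];
  do ?[by left | right].
Qed.

Theorem theorem4p1 (K : fieldType) (m n r m' n' r' : nat) :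
  (0 < m)%N -> (0 < n)%N -> (0 < r)%N ->
  perm_eq [:: m; n; r] [:: m'; n'; r'] ->
  exists f : Qabc K m n r -> Qabc K m' n' r', kalg_iso f.
Proof.
move=> _ _ _ /perm_eq_triple[|[|[|[|[|]]]]] [-> -> ->].
- exact: quot_isomorphic_refl.
- exact: quot_isomorphic_swap_jk.
- exact: quot_isomorphic_swap_ij.
- exact: quot_isomorphic_trans (quot_isomorphic_swap_ij K m n r)
    (quot_isomorphic_swap_jk K n m r).
- exact: quot_isomorphic_trans (quot_isomorphic_swap_jk K m n r)
    (quot_isomorphic_swap_ij K m r n).
- apply: quot_isomorphic_trans (quot_isomorphic_swap_ij K m n r) _.
  exact: quot_isomorphic_trans (quot_isomorphic_swap_jk K n m r)
    (quot_isomorphic_swap_ij K n r m).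
Qed.
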